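(* Let $S'\in\mathcal{L_D}$. A join-semilattice $S$ is equimorphic to $S'$ (as join-semilattices) if and only if there exist two chains $C_1=(X_1,\leq_1)$, $C_2=(X_2,\leq_2)$ and a one-to-one join-preserving map of $S$ into $C_1\times C_2$ whose image $T$ satisfies: (1) the first projection $A_1$ of $T$ has order type $\omega$; (2) the second projection $A_2$ of $T$ is not order-scattered; (3) the set $(\{x\}\times A_2)\cap T$ is finite for every $x\in A_1$.
   Context: A bichain is $B=(X,\leq_1,\leq_2)$ with $\leq_1,\leq_2$ linear orders on $X$; $C(B)$ is the closure system on $X$ whose closed sets are the sets $I_1\cap I_2$ with $I_k$ an initial segment of $(X,\leq_k)$, and $K(C(B))$ is the join-semilattice of its compact elements (closures of finite sets). $\mathcal{L_D}$ is the class of join-semilattices isomorphic to $K(C(B))$ for a bichain $B$ with $(X,\leq_1)$ of order type $\omega$ and $(X,\leq_2)$ not order-scattered. A poset is order-scattered if it contains no copy of $\mathbb{Q}$. Products of chains carry the componentwise order. Two join-semilattices are equimorphic if each embeds into the other by a one-to-one join-preserving map. *)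

From mathcomp Require Import all_boot all_order all_algebra.
From Stdlib Require List.
Set Implicit Arguments. Unset Strict Implicit. Unset Printing Implicit Defensive.

Record JSL := {
  jcar :> Type;
  jle : jcar -> jcar -> Prop;
  jjoin : jcar -> jcar -> jcar;
  jle_refl : forall a, jle a a;
  jle_trans : forall a b c, jle a b -> jle b c -> jle a c;
  jle_antisym : forall a b, jle a b -> jle b a -> a = b;
  jjoin_ubl : forall a b, jle a (jjoin a b);
  jjoin_ubr : forall a b, jle b (jjoin a b);
  jjoin_least : forall a b c, jle a c -> jle b c -> jle (jjoin a b) c
}.

Definition linear_order (X : Type) (le : X -> X -> Prop) : Prop :=
  (forall x, le x x) /\
  (forall x y z, le x y -> le y z -> le x z) /\
  (forall x y, le x y -> le y x -> x = y) /\
  (forall x y, le x y \/ le y x).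

Record Chain := {
  ccar :> Type;
  cle : ccar -> ccar -> Prop;
  cle_linear : linear_order cle
}.

Definition prod_le (C1 C2 : Chain) (p q : (C1 * C2)%type) : Prop :=
  cle p.1 q.1 /\ cle p.2 q.2.

Definition is_lub (T : Type) (le : T -> T -> Prop) (a b c : T) : Prop :=
  le a c /\ le b c /\ (forall d, le a d -> le b d -> le c d).

Definition join_preserving (S : JSL) (T : Type) (le : T -> T -> Prop) (f : S -> T) : Prop :=
  forall a b : S, is_lub le (f a) (f b) (f (jjoin a b)).

Definition jsl_embeds (S S' : JSL) : Prop :=
  exists f : S -> S', (forall a b, f a = f b -> a = b) /\ join_preserving (@jle S') f.

Definition equimorphic (S S' : JSL) : Prop := jsl_embeds S S' /\ jsl_embeds S' S.

Definition has_order_type_omega (X : Type) (le : X -> X -> Prop) (A : X -> Prop) : Prop :=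
  exists g : nat -> X,
    (forall n m : nat, (n <= m)%N <-> le (g n) (g m)) /\
    (forall x, A x <-> exists n, g n = x).

Definition order_scattered (X : Type) (le : X -> X -> Prop) (A : X -> Prop) : Prop :=
  ~ exists h : rat -> X,
      (forall q, A (h q)) /\ (forall q r : rat, (q <= r)%R <-> le (h q) (h r)).

Definition set_eq (X : Type) (A B : X -> Prop) : Prop := forall x, A x <-> B x.

Definition initial_segment (X : Type) (le : X -> X -> Prop) (I : X -> Prop) : Prop :=
  forall x y, I y -> le x y -> I x.

Definition bc_closed (X : Type) (le1 le2 : X -> X -> Prop) (Z : X -> Prop) : Prop :=
  exists I1 I2 : X -> Prop,
    initial_segment le1 I1 /\ initial_segment le2 I2 /\
    set_eq Z (fun x => I1 x /\ I2 x).

Definition bc_closure (X : Type) (le1 le2 : X -> X -> Prop) (Y : X -> Prop) : X -> Prop :=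
  fun x => forall Z, bc_closed le1 le2 Z -> (forall y, Y y -> Z y) -> Z x.

Definition bc_compact (X : Type) (le1 le2 : X -> X -> Prop) (Z : X -> Prop) : Prop :=
  exists F : list X, set_eq Z (bc_closure le1 le2 (fun y => Stdlib.Lists.List.In y F)).

Definition jsl_iso_KCB (S : JSL) (X : Type) (le1 le2 : X -> X -> Prop) : Prop :=
  exists phi : S -> (X -> Prop),
    (forall a, bc_compact le1 le2 (phi a)) /\
    (forall Z, bc_compact le1 le2 Z -> exists a, set_eq (phi a) Z) /\
    (forall a b, set_eq (phi a) (phi b) -> a = b) /\
    (forall a b, set_eq (phi (jjoin a b))
                        (bc_closure le1 le2 (fun x => phi a x \/ phi b x))).

Definition in_LD (S : JSL) : Prop :=
  exists (X : Type) (le1 le2 : X -> X -> Prop),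
    linear_order le1 /\ linear_order le2 /\
    has_order_type_omega le1 (fun _ => True) /\
    ~ order_scattered le2 (fun _ => True) /\
    jsl_iso_KCB S le1 le2.

From mathcomp Require Import all_boot all_order all_algebra.
From mathcomp Require Import boolp lra zify.
From Stdlib Require List.

Set Implicit Arguments. Unset Strict Implicit. Unset Printing Implicit Defensive.
Import Order.TTheory GRing.Theory Num.Theory.
Local Open Scope ring_scope.

(* The compact closed sets of C(B) are the rectangles {x | x <=1 a, x <=2 b} with
   a <=2 b and b <=1 a, so K(C(B)) is the set of such pairs (a, b) plus a bottom, joined
   coordinatewise.  Recording (rank of a, b) represents it in omega x (X, <=2) with finite
   columns, and so represents every S equimorphic to it.  The second projection of such a
   representation contains Q: taking a copy h of Q in (X, <=2) and, along an enumeration of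
   Q, pairs (a_r, h r) with a_r below h r in <=2 but ever further out in <=1, the images get
   increasing first coordinates, which forces their second coordinates to be ordered like
   the r.  Conversely, the countable chain of second coordinates of a representation of S
   embeds in Q, hence in (X, <=2); choosing for the n-th column a point far out in <=1 and
   below its codes in <=2 maps S into K(C(B)).  Coding (X, <=2) into the copy of Q inside
   the second projection maps K(C(B)) back into S. *)

Section LinearOrder.
Variables (T : Type) (le : T -> T -> Prop).
Hypothesis lin : linear_order le.

Lemma lo_refl x : le x x. Proof. by case: lin. Qed.
Lemma lo_trans x y z : le x y -> le y z -> le x z.
Proof. by case: lin => _ [+ _]; apply. Qed.
Lemma lo_anti x y : le x y -> le y x -> x = y.
Proof. by case: lin => _ [_ [+ _]]; apply. Qed.
Lemma lo_total x y : le x y \/ le y x.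
Proof. by case: lin => _ [_ [_ +]]; apply. Qed.
Lemma lo_not x y : ~ le x y -> le y x.
Proof. by case: (lo_total x y). Qed.

Definition lmax x y := if pselect (le x y) then y else x.

Lemma lmax_r x y : le x y -> lmax x y = y.
Proof. by rewrite /lmax; case: (pselect (le x y)). Qed.
Lemma lmax_l x y : le y x -> lmax x y = x.
Proof. by move=> yx; rewrite /lmax; case: (pselect (le x y)) => // xy; apply: lo_anti. Qed.
Lemma lmax_ubl x y : le x (lmax x y).
Proof. by rewrite /lmax; case: (pselect (le x y)) => [//|nxy]; apply: lo_refl. Qed.
Lemma lmax_ubr x y : le y (lmax x y).
Proof. by rewrite /lmax; case: (pselect (le x y)) => [xy|/lo_not //]; apply: lo_refl. Qed.
Lemma lmax_lub x y z : le x z -> le y z -> le (lmax x y) z.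
Proof. by move=> xz yz; rewrite /lmax; case: (pselect (le x y)). Qed.
Lemma lmax_r_le x y : lmax x y = y -> le x y.
Proof. by move=> <-; apply: lmax_ubl. Qed.
End LinearOrder.

Arguments lo_trans {T le} lin {x y z}.
Arguments lo_anti {T le} lin {x y}.
Arguments lo_not {T le} lin {x y}.

Lemma lmax_id T (le : T -> T -> Prop) x : lmax le x x = x.
Proof. by rewrite /lmax; case: (pselect (le x x)). Qed.

Lemma lmax_case T (le : T -> T -> Prop) x y : lmax le x y = x \/ lmax le x y = y.
Proof. by rewrite /lmax; case: (pselect (le x y)); [right|left]. Qed.

Lemma lmax_map T T' (le : T -> T -> Prop) (le' : T' -> T' -> Prop) (m : T -> T') x y :
  (le x y <-> le' (m x) (m y)) -> m (lmax le x y) = lmax le' (m x) (m y).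
Proof.
rewrite /lmax => mle.
by case: (pselect (le x y)) => A; case: (pselect (le' (m x) (m y))) => B //; exfalso; tauto.
Qed.

Lemma lmax_leq m n : lmax (fun a b => (a <= b)%N) m n = maxn m n.
Proof.
rewrite /lmax; case: (pselect (m <= n)%N) => mn; first by rewrite (maxn_idPr mn).
by apply/esym/maxn_idPl/ltnW; rewrite ltnNge; apply/negP.
Qed.

Lemma leq_linear : linear_order (fun m n : nat => (m <= n)%N).
Proof.
split; [by []|split; [move=> ? ? ?; exact: leq_trans|split]].
  by move=> m n mn nm; apply/anti_leq/andP.
by move=> m n; case: (leqP m n) => [|/ltnW]; [left|right].
Qed.

Lemma lub_unique T (le : T -> T -> Prop) x y z z' :
  (forall a b, le a b -> le b a -> a = b) ->
  is_lub le x y z -> is_lub le x y z' -> z = z'.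
Proof. by move=> anti [? [? lub]] [? [? lub']]; apply: anti; [apply: lub|apply: lub']. Qed.

Lemma jjoin_lub (S : JSL) (x y : S) : is_lub (@jle S) x y (jjoin x y).
Proof. by split; [exact: jjoin_ubl|split; [exact: jjoin_ubr|exact: jjoin_least]]. Qed.

Lemma join_preserving_jjoin (S S' : JSL) (f : S -> S') :
  join_preserving (@jle S') f <-> forall a b, f (jjoin a b) = jjoin (f a) (f b).
Proof.
split=> fj a b; last by rewrite fj; apply: jjoin_lub.
exact: lub_unique (@jle_antisym S') (fj a b) (jjoin_lub _ _).
Qed.

Section ChainProduct.
Variables C1 C2 : Chain.

Definition prod_max (p q : C1 * C2) : C1 * C2 :=
  (lmax (@cle C1) p.1 q.1, lmax (@cle C2) p.2 q.2).

Lemma prod_max_lub p q : is_lub (@prod_le C1 C2) p q (prod_max p q).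
Proof.
have [lin1 lin2] := (cle_linear C1, cle_linear C2).
split; [|split]; first by split; apply: lmax_ubl.
  by split; apply: lmax_ubr.
by move=> d [? ?] [? ?]; split; apply: lmax_lub.
Qed.

Lemma join_preserving_prod (S : JSL) (f : S -> C1 * C2) :
  join_preserving (@prod_le C1 C2) f <-> forall a b, f (jjoin a b) = prod_max (f a) (f b).
Proof.
split=> fj a b; last by rewrite fj; apply: prod_max_lub.
apply: lub_unique (fj a b) (prod_max_lub _ _) => -[x1 x2] [y1 y2] [/= ? ?] [/= ? ?].
by congr pair; apply: (lo_anti (cle_linear _)).
Qed.
End ChainProduct.

Lemma order_embedding_inj d (R : porderType d) (T : Type) (le : T -> T -> Prop) (h : R -> T) :
  (forall x, le x x) -> (forall q r, (q <= r)%O <-> le (h q) (h r)) -> injective h.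
Proof. by move=> refl h_le q r hqr; apply/le_anti/andP; split; apply/h_le; rewrite hqr. Qed.

Lemma injective_eventually_notin (Z : Type) (u : nat -> Z) (L : list Z) :
  injective u -> exists N, forall k, (N <= k)%N -> ~ List.In (u k) L.
Proof.
move=> u_inj; elim: L => [|z L [N uN]]; first by exists 0%N => k _ [].
case: (pselect (exists k, u k = z)) => [[k ukz]|noz].
- exists (maxn N k.+1) => j; rewrite geq_max => /andP[Nj kj] /= [ujz|]; last exact: uN.
  by move: kj; rewrite (u_inj j k) ?ltnn // ukz.
- by exists N => j Nj /= [ujz|]; [apply: noz; exists j|apply: uN].
Qed.

Lemma injective_unbounded (u : nat -> nat) : injective u ->
  forall N, exists K, forall k, (K <= k)%N -> (N < u k)%N.
Proof.
move=> u_inj N; have [K uK] := injective_eventually_notin (List.seq 0 N.+1) u_inj.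
by exists K => k /uK uk; rewrite ltnNge; apply/negP => ukN; apply: uk; apply/List.in_seq; lia.
Qed.

Section UnboundedNat.
Variable P : nat -> Prop.
Hypothesis P_unbounded : forall N, exists2 n, P n & (N <= n)%N.

Lemma exists_from N : exists n, `[< P n >] && (N <= n)%N.
Proof. by have [n Pn Nn] := P_unbounded N; exists n; rewrite Nn andbT; apply/asboolP. Qed.

Definition least_from N := ex_minn (exists_from N).

Lemma least_fromP N : [/\ P (least_from N), (N <= least_from N)%N
  & forall n, P n -> (N <= n)%N -> (least_from N <= n)%N].
Proof.
rewrite /least_from; case: ex_minnP => m /andP[/asboolP Pm Nm] min_m.
by split=> // n Pn Nn; apply: min_m; rewrite Nn andbT; apply/asboolP.
Qed.

Definition enum_from k := iter k (fun m => least_from m.+1) (least_from 0).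

Lemma enum_from_lt k : (enum_from k < enum_from k.+1)%N.
Proof. by have [] := least_fromP (enum_from k).+1. Qed.

Lemma unbounded_nat_omega : has_order_type_omega (fun m n : nat => (m <= n)%N) P.
Proof.
have mono : {mono enum_from : m n / (m <= n)%N}.
  apply: leq_mono; apply: homo_ltn => [y x z|k]; [exact: ltn_trans|exact: enum_from_lt].
exists enum_from; split=> [m n|n]; first by rewrite mono.
split=> [Pn|[[|k] <-]]; [|by have [] := least_fromP 0|by have [] := least_fromP (enum_from k).+1].
apply: contrapT => not_enum.
have below k : (enum_from k <= n)%N.
  elim: k => [|k IH]; first by have [_ _ ->] := least_fromP 0.
  have [_ _ ->] // := least_fromP (enum_from k).+1.
  by rewrite ltn_neqAle IH andbT; apply/eqP => ekn; apply: not_enum; exists k.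
have := below n.+1; rewrite leqNgt => /negP; apply.
by elim: n.+1 => // k IH; apply: leq_ltn_trans (enum_from_lt k).
Qed.
End UnboundedNat.

Definition nat_chain : Chain :=
  {| ccar := nat; cle := fun m n => (m <= n)%N; cle_linear := leq_linear |}.

Section OptionChain.
Variables (T : Type) (le : T -> T -> Prop).
Hypothesis lin : linear_order le.

Definition option_le (o o' : option T) : Prop :=
  match o, o' with None, _ => True | Some _, None => False | Some a, Some b => le a b end.

Lemma option_le_linear : linear_order option_le.
Proof.
split; [|split; [|split]].
- by case=> //; apply: lo_refl.
- by case=> [a|] [b|] [c|] //=; apply: lo_trans.
- by case=> [a|] [b|] //= ab ba; rewrite (lo_anti lin ab ba).
- by case=> [a|] [b|] /=; auto; apply: lo_total.
Qed.

Definition option_chain : Chain :=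
  {| ccar := option T; cle := option_le; cle_linear := option_le_linear |}.
End OptionChain.

Lemma list_nat_bound (T : Type) (m : T -> nat) (l : list T) :
  exists N, forall x, List.In x l -> (m x <= N)%N.
Proof.
elim: l => [|y l [N mN]]; first by exists 0%N.
by exists (maxn (m y) N) => x [<-|/mN xN]; [apply: leq_maxl|apply: leq_trans xN (leq_maxr _ _)].
Qed.

Lemma finite_levels_escape (T Y : Type) (F : T -> Y) (lvl : T -> nat) :
  (forall N, exists L, forall s, (lvl s <= N)%N -> List.In (F s) L) ->
  forall u : nat -> T, injective (F \o u) ->
  forall N, exists K, forall k, (K <= k)%N -> (N < lvl (u k))%N.
Proof.
move=> levels u Fu_inj N; have [L FL] := levels N.
have [K uK] := injective_eventually_notin L Fu_inj.
by exists K => k /uK Fuk; rewrite ltnNge; apply/negP => /FL.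
Qed.

Lemma omega_rank (X : Type) (le : X -> X -> Prop) : has_order_type_omega le (fun=> True) ->
  exists (g : nat -> X) (rk : X -> nat), cancel rk g /\ forall a b, le a b <-> (rk a <= rk b)%N.
Proof.
case=> g [g_le g_onto]; have /choice[rk rkK] : forall x, exists n, g n = x by move=> x; apply/g_onto.
by exists g, rk; split=> // a b; rewrite g_le !rkK.
Qed.

Section CountableChainEmbedding.
Variables (R : realFieldType) (lo hi : R).
Hypothesis lo_lt_hi : lo < hi.

Lemma interval_cut n (a : nat -> R) (P : pred nat) :
  (forall i, (i < n)%N -> lo < a i < hi) ->
  (forall i j, (i < n)%N -> (j < n)%N -> P i -> ~~ P j -> a i < a j) ->
  exists2 v, lo < v < hi & forall i, (i < n)%N -> (P i -> a i < v) /\ (~~ P i -> v < a i).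
Proof.
move=> a_in a_cut.
pose l := \big[Order.max/lo]_(i < n | P i) a i.
pose u := \big[Order.min/hi]_(i < n | ~~ P i) a i.
have lu : l < u.
  apply: bigmax_lt => [|i Pi]; apply: lt_bigmin => [|j nPj] //.
  - by have /andP[] := a_in j (ltn_ord j).
  - by have /andP[] := a_in i (ltn_ord i).
  - exact: a_cut.
have [lol uhi] : lo <= l /\ u <= hi by split; [apply: bigmax_ge_id|apply: bigmin_le_id].
exists ((l + u) / 2); first by apply/andP; split; lra.
move=> i ni; split=> [Pi|nPi].
- have : a i <= l by exact: (le_bigmax_cond lo (j := Ordinal ni) (fun i : 'I_n => a i)).
  lra.
- have : u <= a i by exact: (bigmin_le_cond hi (j := Ordinal ni) (fun i : 'I_n => a i)).
  lra.
Qed.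

Variables (T : Type) (le : T -> T -> Prop).
Hypothesis lin : linear_order le.
Variable y : nat -> T.

Definition faithful (a : nat -> R) n :=
  (forall i, (i < n)%N -> lo < a i < hi) /\
  (forall i j, (i < n)%N -> (j < n)%N -> le (y i) (y j) <-> a i <= a j).

Definition extend (a : nat -> R) n v i := if i == n then v else a i.

Lemma faithful_extendP a n v : faithful a n -> lo < v < hi ->
  (forall i, (i < n)%N -> (le (y i) (y n) <-> a i <= v) /\ (le (y n) (y i) <-> v <= a i)) ->
  faithful (extend a n v) n.+1.
Proof.
move=> [a_in a_le] v_in v_le.
have ext_lt i : (i < n)%N -> extend a n v i = a i by move=> /ltn_eqF; rewrite /extend => ->.
have ext_n : extend a n v n = v by rewrite /extend eqxx.
have ltSn k : (k < n.+1)%N -> k = n \/ (k < n)%N by rewrite ltnS leq_eqVlt => /predU1P.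
split=> [i /ltSn [->|ni]|i j /ltSn [->|ni] /ltSn [->|nj]].
- by rewrite ext_n.
- by rewrite ext_lt //; apply: a_in.
- by rewrite ext_n; split=> _; [exact: lexx|exact: (lo_refl lin)].
- by rewrite ext_n (ext_lt _ nj); have [_ ->] := v_le j nj.
- by rewrite ext_n (ext_lt _ ni); have [-> _] := v_le i ni.
- by rewrite (ext_lt _ ni) (ext_lt _ nj); exact: a_le.
Qed.

Lemma faithful_extend a n : exists v, faithful a n -> faithful (extend a n v) n.+1.
Proof.
case: (pselect (exists2 k, (k < n)%N & y k = y n)) => [[k kn ykn]|fresh].
  exists (a k) => fa; apply: faithful_extendP => // [|i ni]; first exact: fa.1.
  by rewrite -ykn; split; apply: fa.2.
have lt_n i : (i < n)%N -> le (y i) (y n) -> ~ le (y n) (y i).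
  by move=> ni yin yni; apply: fresh; exists i => //; apply: (lo_anti lin).
pose P i := `[< le (y i) (y n) >].
case: (pselect (faithful a n)) => [[a_in a_le]|]; last by exists lo.
have [v v_in v_cut] : exists2 v, lo < v < hi &
    forall i, (i < n)%N -> (P i -> a i < v) /\ (~~ P i -> v < a i).
  apply: interval_cut => // i j ni nj /asboolP yin /asboolPn yjn.
  rewrite ltNge; apply/negP => /(a_le _ _ nj ni) yji.
  exact: yjn (lo_trans lin yji yin).
exists v => _; apply: faithful_extendP => // i ni.
have [vP vnP] := v_cut i ni.
case: (pselect (le (y i) (y n))) => [yin|/[dup] nyin /(lo_not lin) yni].
- have ai_v : a i < v by apply: vP; apply/asboolP.
  split; split=> H; [exact: ltW|exact: yin|by case: (lt_n i ni yin H)|by rewrite leNgt ai_v in H].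
- have v_ai : v < a i by apply: vnP; apply/asboolPn.
  split; split=> H; [by case: nyin|by rewrite leNgt v_ai in H|exact: ltW|exact: yni].
Qed.

Definition next_value a n := projT1 (cid (faithful_extend a n)).

Fixpoint approx n : nat -> R :=
  if n is m.+1 then extend (approx m) m (next_value (approx m) m) else fun=> lo.

Lemma faithful_approx n : faithful (approx n) n.
Proof.
elim: n => [|n IH]; first by split.
by rewrite /= /next_value; case: cid => v /= /(_ IH).
Qed.

Lemma approx_stable m i : (i < m)%N -> approx m i = approx i.+1 i.
Proof.
elim: m => // m IH; rewrite ltnS leq_eqVlt => /predU1P[-> //|im].
by rewrite /= /extend (ltn_eqF im) IH.
Qed.

Lemma indexed_chain_embedding :
  exists e : nat -> R, forall i j, lo < e i < hi /\ (le (y i) (y j) <-> e i <= e j).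
Proof.
exists (fun i => approx i.+1 i) => i j.
have [app_in app_le] := faithful_approx (maxn i j).+1.
have [im jm] : (i < (maxn i j).+1)%N /\ (j < (maxn i j).+1)%N by rewrite !ltnS leq_maxl leq_maxr.
by rewrite -(approx_stable im) -(approx_stable jm); split; [apply: app_in|apply: app_le].
Qed.

Lemma countable_chain_embedding : exists E : T -> R, forall a b,
  (exists i, y i = a) -> (exists j, y j = b) -> lo < E a < hi /\ (le a b <-> E a <= E b).
Proof.
have [e e_emb] := indexed_chain_embedding.
have /choice[idx idxK] : forall a, exists i, (exists j, y j = a) -> y i = a.
  by move=> a; case: (pselect (exists i, y i = a)) => [[i <-]|]; [exists i|exists 0%N].
by exists (e \o idx) => a b /idxK ya /idxK yb; have := e_emb (idx a) (idx b); rewrite ya yb.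
Qed.
End CountableChainEmbedding.

Lemma between_unbounded (R : realFieldType) (u : R -> nat) : injective u ->
  forall r s : R, r < s -> forall N, exists t, r < t < s /\ (N < u t)%N.
Proof.
move=> u_inj r s rs N; pose t (k : nat) := r + (s - r) / k.+2%:R.
have t_in k : r < t k < s.
  have k2 : 1 < k.+2%:R :> R by rewrite ltr1n.
  have sr : 0 < s - r by rewrite subr_gt0.
  have : 0 < (s - r) / k.+2%:R < s - r.
    by rewrite divr_gt0 ?ltr0Sn //= ltr_pdivrMr ?ltr0Sn // ltr_pMr.
  by rewrite /t; set d := _ / _ => /andP[? ?]; apply/andP; split; lra.
have t_inj : injective t.
  have sr0 : s - r != 0 by rewrite subr_eq0 gt_eqF.
  by move=> k k' /addrI /(mulfI sr0) /invr_inj /eqP; rewrite eqr_nat => /eqP [].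
have [K uK] := injective_unbounded (inj_comp u_inj t_inj) N.
by exists (t K); split; [apply: t_in|apply: uK].
Qed.

Lemma list_lower_bound (R : realDomainType) (T : Type) (e : T -> R) (l : list T) :
  exists v, forall x, List.In x l -> v < e x.
Proof.
elim: l => [|y l [v ve]]; first by exists 0.
exists (Num.min (e y) v - 1) => x [<-|/ve vx].
- have : Num.min (e y) v <= e y by rewrite ge_min lexx.
  lra.
- have : Num.min (e y) v <= v by rewrite ge_min lexx orbT.
  lra.
Qed.

Lemma list_greatest (T : Type) (le : T -> T -> Prop) (x : T) (l : list T) : linear_order le ->
  exists2 m, List.In m (x :: l) & forall z, List.In z (x :: l) -> le z m.
Proof.
move=> lin; elim: l x => [|y l IH] x.
  by exists x => [|z [<-|[]]]; [left|exact: (lo_refl lin)].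
have [m ml lm] := IH y; case: (lo_total lin x m) => [xm|mx].
  by exists m => [|z [<-|]]; [right|exact: xm|exact: lm].
by exists x => [|z [<-|/lm zm]]; [left|exact: (lo_refl lin)|exact: (lo_trans lin zm mx)].
Qed.

Section Bichain.
Variables (X : Type) (le1 le2 : X -> X -> Prop).
Hypotheses (lin1 : linear_order le1) (lin2 : linear_order le2).

Definition rect (a b x : X) := le1 x a /\ le2 x b.
Definition rect_pair (a b : X) := le2 a b /\ le1 b a.

Definition pair_ok (o : option (X * X)) := if o is Some (a, b) then rect_pair a b else True.
Definition pair_set (o : option (X * X)) : X -> Prop :=
  if o is Some (a, b) then rect a b else fun=> False.
Definition pair_join (o o' : option (X * X)) : option (X * X) :=
  match o, o' with
  | None, _ => o'
  | _, None => o
  | Some (a, b), Some (a', b') => Some (lmax le1 a a', lmax le2 b b')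
  end.

Lemma rect_closed a b : bc_closed le1 le2 (rect a b).
Proof.
exists (le1^~ a), (le2^~ b); split; [|split] => //.
- by move=> x y ya xy; apply: (lo_trans lin1 xy ya).
- by move=> x y yb xy; apply: (lo_trans lin2 xy yb).
Qed.

Lemma rect_pair_mem a b : rect_pair a b -> rect a b a /\ rect a b b.
Proof. by case=> ab ba; split; split=> //; [exact: (lo_refl lin1)|exact: (lo_refl lin2)]. Qed.

Lemma closure_rect (F : X -> Prop) a b : rect_pair a b -> F a -> F b ->
  (forall x, F x -> rect a b x) -> set_eq (bc_closure le1 le2 F) (rect a b).
Proof.
move=> _ Fa Fb Fab x; split=> [|[xa xb] Z [I1 [I2 [I1_ini [I2_ini Z_eq]]]] FZ].
  by apply; [apply: rect_closed|].
have [/Z_eq[I1a _] /Z_eq[_ I2b]] := (FZ a Fa, FZ b Fb).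
by apply/Z_eq; split; [apply: I1_ini xa|apply: I2_ini xb].
Qed.

Lemma closure_ext (F G : X -> Prop) :
  set_eq F G -> set_eq (bc_closure le1 le2 F) (bc_closure le1 le2 G).
Proof. by move=> FG x; split=> cl Z Z_cl GZ; apply: cl => // y /FG; apply: GZ. Qed.

Lemma closure_empty (F : X -> Prop) : (forall x, ~ F x) -> forall x, ~ bc_closure le1 le2 F x.
Proof.
move=> F0 x; apply; last by move=> y /F0.
by exists (fun=> False), (fun=> False); split; [|split] => // z; split=> [|[]].
Qed.

Lemma compact_pair_set Z : bc_compact le1 le2 Z -> exists2 o, pair_ok o & set_eq Z (pair_set o).
Proof.
case=> -[|x l] Z_eq.
  by exists None => // y; rewrite Z_eq; split=> // /(closure_empty (fun z => id)).
have [a la al] := list_greatest x l lin1; have [b lb bl] := list_greatest x l lin2.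
have ab : rect_pair a b by split; [apply: bl|apply: al].
by exists (Some (a, b)) => // y; rewrite Z_eq; apply: closure_rect => // z zl; split; auto.
Qed.

Lemma pair_set_compact o : pair_ok o -> bc_compact le1 le2 (pair_set o).
Proof.
case: o => [[a b] ab|_]; last first.
  by exists [::] => x; split=> // /(closure_empty (fun z => id)).
have [ra rb] := rect_pair_mem ab.
exists [:: a; b] => x; symmetry.
by apply: closure_rect => //; [left|right; left|move=> z [<-|[<-|[]]]].
Qed.

Lemma pair_set_inj o o' : pair_ok o -> pair_ok o' -> set_eq (pair_set o) (pair_set o') -> o = o'.
Proof.
case: o o' => [[a b]|] [[a' b']|] //= ab ab' eq_ab.
- have [/eq_ab[aa' _] /eq_ab[_ bb']] := rect_pair_mem ab.
  have [/eq_ab[a'a _] /eq_ab[_ b'b]] := rect_pair_mem ab'.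
  by rewrite (lo_anti lin1 aa' a'a) (lo_anti lin2 bb' b'b).
- by have [/eq_ab] := rect_pair_mem ab.
- by have [/eq_ab] := rect_pair_mem ab'.
Qed.

Lemma pair_join_ok o o' : pair_ok o -> pair_ok o' -> pair_ok (pair_join o o').
Proof.
case: o o' => [[a b]|] [[a' b']|] //= [ab ba] [ab' ba']; split.
- case: (lmax_case le1 a a') => ->.
    by apply: (lo_trans lin2 ab (lmax_ubl lin2 _ _)).
  by apply: (lo_trans lin2 ab' (lmax_ubr lin2 _ _)).
- case: (lmax_case le2 b b') => ->.
    by apply: (lo_trans lin1 ba (lmax_ubl lin1 _ _)).
  by apply: (lo_trans lin1 ba' (lmax_ubr lin1 _ _)).
Qed.

Lemma closure_pair_join o o' : pair_ok o -> pair_ok o' ->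
  set_eq (bc_closure le1 le2 (fun x => pair_set o x \/ pair_set o' x)) (pair_set (pair_join o o')).
Proof.
move=> ok ok'; have := pair_join_ok ok ok'.
case: o o' ok ok' => [[a b]|] [[a' b']|] //= ab ab' ab''.
- have [[ra rb] [ra' rb']] := (rect_pair_mem ab, rect_pair_mem ab').
  apply: closure_rect => //.
  + by case: (lmax_case le1 a a') => ->; auto.
  + by case: (lmax_case le2 b b') => ->; auto.
  + move=> z [[za zb]|[za zb]]; split.
    * exact: (lo_trans lin1 za (lmax_ubl lin1 _ _)).
    * exact: (lo_trans lin2 zb (lmax_ubl lin2 _ _)).
    * exact: (lo_trans lin1 za (lmax_ubr lin1 _ _)).
    * exact: (lo_trans lin2 zb (lmax_ubr lin2 _ _)).
- have [ra rb] := rect_pair_mem ab.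
  by apply: closure_rect => //; [left|left|move=> z [|[]]].
- have [ra rb] := rect_pair_mem ab'.
  by apply: closure_rect => //; [right|right|move=> z [[]|]].
- by move=> x; split=> // /closure_empty; apply=> z [].
Qed.

Lemma KCB_pair_coordinates (S : JSL) : jsl_iso_KCB S le1 le2 ->
  exists cp : S -> option (X * X),
    [/\ injective cp, forall s, pair_ok (cp s), forall o, pair_ok o -> exists s, cp s = o
      & forall s t, cp (jjoin s t) = pair_join (cp s) (cp t)].
Proof.
case=> phi [phi_compact [phi_onto [phi_inj phi_join]]].
have /choice[cp cp_spec] : forall s, exists o, pair_ok o /\ set_eq (phi s) (pair_set o).
  by move=> s; have [o ok eq_o] := compact_pair_set (phi_compact s); exists o.
have phi_cp s o : pair_ok o -> set_eq (phi s) (pair_set o) -> cp s = o.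
  move=> ok eq_o; have [ok' eq'] := cp_spec s; apply: pair_set_inj => // x.
  by rewrite -eq' eq_o.
exists cp; split.
- move=> s t st; apply: phi_inj => x; have [_ ->] := cp_spec s; have [_ ->] := cp_spec t.
  by rewrite st.
- by move=> s; have [] := cp_spec s.
- move=> o ok; have [s eq_s] := phi_onto _ (pair_set_compact ok).
  by exists s; apply: phi_cp.
- move=> s t; have [[ok_s eq_s] [ok_t eq_t]] := (cp_spec s, cp_spec t).
  apply: phi_cp; first exact: pair_join_ok.
  move=> x; rewrite phi_join -closure_pair_join //; apply: closure_ext => y.
  by rewrite eq_s eq_t.
Qed.
End Bichain.

Definition omega_representable (S : JSL) : Prop :=
  exists (C1 C2 : Chain) (f : S -> (C1 * C2)%type),
    (forall a b, f a = f b -> a = b) /\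
    join_preserving (@prod_le C1 C2) f /\
    has_order_type_omega (@cle C1) (fun x => exists s, (f s).1 = x) /\
    ~ order_scattered (@cle C2) (fun y => exists s, (f s).2 = y) /\
    (forall x : C1, (exists s, (f s).1 = x) ->
       exists l : list C2, forall y : C2, (exists s, f s = (x, y)) -> List.In y l).

Section Model.
Variables (X : Type) (le1 le2 : X -> X -> Prop).
Hypotheses (lin1 : linear_order le1) (lin2 : linear_order le2).
Variables (g1 : nat -> X) (rk : X -> nat).
Hypotheses (rkK : cancel rk g1) (rk_le : forall a b, le1 a b <-> (rk a <= rk b)%N).
Variable h : rat -> X.
Hypothesis h_le : forall q r, q <= r <-> le2 (h q) (h r).
Variables (S' : JSL) (cp : S' -> option (X * X)).
Hypotheses (cp_inj : injective cp) (cp_ok : forall s, pair_ok le1 le2 (cp s))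
  (cp_join : forall s t, cp (jjoin s t) = pair_join le1 le2 (cp s) (cp t)).
Variable elt : X -> X -> S'.
Hypothesis elt_cp : forall a b, rect_pair le1 le2 a b -> cp (elt a b) = Some (a, b).

Lemma rk_inj : injective rk. Proof. exact: can_inj rkK. Qed.

Lemma h_inj : injective h. Proof. exact: order_embedding_inj (lo_refl lin2) h_le. Qed.

Lemma rect_pair_below q r : q < r -> (rk (h r) <= rk (h q))%N -> rect_pair le1 le2 (h q) (h r).
Proof. by move=> qr rq; split; [apply/h_le/ltW|apply/rk_le]. Qed.

Lemma join_elt_r a b a' b' : rect_pair le1 le2 a b -> rect_pair le1 le2 a' b' ->
  jjoin (elt a b) (elt a' b') = elt a' b' <-> le1 a a' /\ le2 b b'.
Proof.
move=> ab ab'; split=> [ab_le|[aa' bb']].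
  have := cp_join (elt a b) (elt a' b'); rewrite ab_le !elt_cp //= => -[E1 E2].
  by split; [apply: (lmax_r_le lin1) (esym E1)|apply: (lmax_r_le lin2) (esym E2)].
by apply: cp_inj; rewrite cp_join !elt_cp //= lmax_r // lmax_r.
Qed.

Section SecondProjection.
Variables (Z : Chain) (F : S' -> nat * Z).
Hypotheses (F_inj : injective F)
  (F_join : forall s t, F (jjoin s t) = (maxn (F s).1 (F t).1, lmax (@cle Z) (F s).2 (F t).2))
  (F_levels : forall N, exists L, forall s, ((F s).1 <= N)%N -> List.In (F s) L).

Lemma join_F_r s t : jjoin s t = t <-> ((F s).1 <= (F t).1)%N /\ cle (F s).2 (F t).2.
Proof.
split=> [st|[st1 st2]]; last first.
  by apply: F_inj; rewrite F_join (maxn_idPr st1) lmax_r //; case: (F t).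
have E := F_join s t; rewrite st in E.
have [/= E1 E2] := (congr1 fst E, congr1 snd E).
by split; [rewrite E1 leq_maxl|exact: (lmax_r_le (cle_linear Z)) (esym E2)].
Qed.

Lemma below_exists r (C B : nat) : exists q, q < r /\
  [/\ (C < rk (h q))%N, (rk (h r) < rk (h q))%N & (B < (F (elt (h q) (h r))).1)%N].
Proof.
pose q (k : nat) := r - k.+1%:R.
have q_lt k : q k < r by rewrite /q ltrBlDr ltrDl ltr0Sn.
have q_inj : injective q by move=> k k' /addrI /oppr_inj /eqP; rewrite eqr_nat => /eqP [].
have [K1 rkK1] := injective_unbounded (inj_comp rk_inj (inj_comp h_inj q_inj)) (maxn C (rk (h r))).
have pair_k k : rect_pair le1 le2 (h (q (K1 + k))) (h r).
  apply: rect_pair_below => //; apply: ltnW.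
  by apply: leq_ltn_trans (rkK1 _ (leq_addr _ _)); rewrite leq_maxr.
have u_inj : injective (fun k => elt (h (q (K1 + k))) (h r)).
  by move=> k k' /(congr1 cp); rewrite !elt_cp // => -[/h_inj/q_inj/addnI].
have [K2 FK2] := finite_levels_escape (lvl := fun s => (F s).1) F_levels (inj_comp F_inj u_inj) B.
exists (q (K1 + K2)); split=> //.
have := rkK1 (K1 + K2)%N (leq_addr _ _); rewrite gtn_max => /andP[? ?].
by split=> //; apply: FK2.
Qed.

Definition below r C B := projT1 (cid (below_exists r C B)).

Lemma belowP r C B : let q := below r C B in q < r /\
  [/\ (C < rk (h q))%N, (rk (h r) < rk (h q))%N & (B < (F (elt (h q) (h r))).1)%N].
Proof. exact: projT2 (cid (below_exists r C B)). Qed.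

Definition bounds_next r (b : nat * nat) :=
  let q := below r b.1 b.2 in (rk (h q), (F (elt (h q) (h r))).1).

(* Along the enumeration of Q by [pickle], each [r] receives a witness [elt (h (lower r)) (h r)]
   whose rank and level exceed those of all witnesses of earlier rationals. *)
Fixpoint bounds n : nat * nat :=
  if n is m.+1 then bounds_next (odflt 0 (unpickle m)) (bounds m) else (0%N, 0%N).

Definition lower r := below r (bounds (pickle r)).1 (bounds (pickle r)).2.
Definition witness r := elt (h (lower r)) (h r).
Definition beta r := (F (witness r)).2.

Lemma bounds_pickle r : bounds (pickle r).+1 = (rk (h (lower r)), (F (witness r)).1).
Proof.
have -> : bounds (pickle r).+1 = bounds_next (odflt 0 (unpickle (pickle r))) (bounds (pickle r)) by [].
by rewrite pickleK.
Qed.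

Lemma bounds_lt n : ((bounds n).1 < (bounds n.+1).1)%N /\ ((bounds n).2 < (bounds n.+1).2)%N.
Proof. by have [_ [? _ ?]] := belowP (odflt 0 (unpickle n)) (bounds n).1 (bounds n).2. Qed.

Lemma witness_pair r : rect_pair le1 le2 (h (lower r)) (h r).
Proof.
have [qr [_ rq _]] := belowP r (bounds (pickle r)).1 (bounds (pickle r)).2.
exact: rect_pair_below (ltnW rq).
Qed.

Lemma bounds_mono m n : (m <= n)%N ->
  ((bounds m).1 <= (bounds n).1)%N /\ ((bounds m).2 <= (bounds n).2)%N.
Proof.
have trans : forall y x z, (x <= y)%N -> (y <= z)%N -> (x <= z)%N by move=> ? ? ?; apply: leq_trans.
move=> mn; split.
- by apply: (@homo_leq nat (fun k => (bounds k).1) leq) mn => // k; apply/ltnW/(bounds_lt k).1.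
- by apply: (@homo_leq nat (fun k => (bounds k).2) leq) mn => // k; apply/ltnW/(bounds_lt k).2.
Qed.

Lemma witness_lt (r s : rat) : (pickle r < pickle s)%N ->
  (rk (h (lower r)) < rk (h (lower s)))%N /\ ((F (witness r)).1 < (F (witness s)).1)%N.
Proof.
move=> /bounds_mono; rewrite bounds_pickle => -[ge1 ge2].
have [lt1 lt2] := bounds_lt (pickle s); rewrite bounds_pickle in lt1 lt2.
by split; [exact: leq_ltn_trans ge1 lt1|exact: leq_ltn_trans ge2 lt2].
Qed.

Lemma beta_le_enum (r s : rat) : (pickle r < pickle s)%N -> r < s -> cle (beta r) (beta s).
Proof.
move=> rs_code rs; have [rk_lt F_lt] := witness_lt rs_code.
have : jjoin (witness r) (witness s) = witness s.
  apply/join_elt_r; try exact: witness_pair.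
  by split; [apply/rk_le/ltnW|apply/h_le/ltW].
by case/join_F_r.
Qed.

Lemma beta_nle_enum (r s : rat) : (pickle r < pickle s)%N -> s < r -> ~ cle (beta r) (beta s).
Proof.
move=> rs_code sr beta_rs; have [_ F_lt] := witness_lt rs_code.
have : jjoin (witness r) (witness s) = witness s by apply/join_F_r; split=> //; apply: ltnW.
case/join_elt_r; try exact: witness_pair.
by move=> _ /h_le; rewrite leNgt sr.
Qed.

(* Compare through a rational strictly between r and s that is enumerated after s. *)
Lemma beta_lt (r s : rat) : r < s -> ~ cle (beta s) (beta r).
Proof.
move=> rs beta_sr.
have [t [/andP[rt ts] st_code]] := between_unbounded (pcan_inj (@pickleK rat)) rs (pickle s).
have beta_rt : cle (beta r) (beta t).
  case: (ltngtP (pickle r) (pickle t)) => [rt_code|tr_code|/(pcan_inj (@pickleK rat)) rt_eq].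
  - exact: beta_le_enum.
  - exact: (lo_not (cle_linear Z)) (beta_nle_enum tr_code rt).
  - by move: rt; rewrite rt_eq ltxx.
exact: (beta_nle_enum st_code ts) ((lo_trans (cle_linear Z)) beta_sr beta_rt).
Qed.

Lemma rat_in_second_projection : exists beta : rat -> Z,
  (forall q, exists s, (F s).2 = beta q) /\ forall q r, q <= r <-> cle (beta q) (beta r).
Proof.
exists beta; split=> [q|q r]; first by exists (witness q).
split=> [|beta_qr]; last by rewrite leNgt; apply/negP => /beta_lt.
rewrite le_eqVlt => /predU1P[-> |qr]; first exact: (lo_refl (cle_linear Z)).
exact: (lo_not (cle_linear Z)) (beta_lt qr).
Qed.

Lemma first_projection_unbounded N : exists s, (N < (F s).1)%N.
Proof.
pose u (n : nat) := elt (h n%:R) (h n%:R).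
have diag n : rect_pair le1 le2 (h n%:R) (h n%:R).
  by split; [apply: (lo_refl lin2)|apply: (lo_refl lin1)].
have u_inj : injective u.
  by move=> m n /(congr1 cp); rewrite !elt_cp // => -[/h_inj/eqP]; rewrite eqr_nat => /eqP.
have [K FK] := finite_levels_escape (lvl := fun s => (F s).1) F_levels (inj_comp F_inj u_inj) N.
by exists (u K); apply: FK.
Qed.

End SecondProjection.

Definition coord (s : S') : nat * option X :=
  if cp s is Some (a, b) then ((rk a).+1, Some b) else (0%N, None).

Lemma coord_inj : injective coord.
Proof.
move=> s t; rewrite /coord => st; apply: cp_inj; move: st.
by case: (cp s) (cp t) => [[a b]|] [[a' b']|] //= [/rk_inj -> ->].
Qed.

Lemma coord_join s t : coord (jjoin s t) =
  (maxn (coord s).1 (coord t).1, lmax (option_le le2) (coord s).2 (coord t).2).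
Proof.
rewrite /coord cp_join; case: (cp s) (cp t) => [[a b]|] [[a' b']|] //=.
- rewrite -lmax_leq; congr pair; last exact: (lmax_map (m := Some)).
  by apply: (lmax_map (m := fun x => (rk x).+1)); rewrite rk_le ltnS.
- by rewrite maxn0 lmax_l //; apply: option_le_linear.
- by rewrite lmax_r.
- by rewrite lmax_id.
Qed.

Lemma coord_column s :
  List.In (coord s).2 (None :: List.map (fun i => Some (g1 i)) (List.seq 0 (coord s).1)).
Proof.
have := cp_ok s; rewrite /coord; case: (cp s) => [[a b] [_ /rk_le ba]|_]; last by left.
apply/List.in_cons/List.in_map_iff; exists (rk b); rewrite rkK; split=> //.
by apply/List.in_seq => /=; lia.
Qed.

Lemma coord_levels N : exists L, forall s, ((coord s).1 <= N)%N -> List.In (coord s) L.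
Proof.
exists (List.list_prod (List.seq 0 N.+1) (None :: List.map (fun i => Some (g1 i)) (List.seq 0 N))).
move=> s sN; rewrite [coord s]surjective_pairing; apply: List.in_prod; first by apply/List.in_seq; lia.
case: (coord_column s) => [<-|/List.in_map_iff [i [<- /List.in_seq iN]]]; first by left.
by right; apply/List.in_map_iff; exists i; split=> //; apply/List.in_seq; lia.
Qed.

Lemma equimorphic_representable (S : JSL) : equimorphic S S' -> omega_representable S.
Proof.
move=> [[u [u_inj /join_preserving_jjoin u_join]] [w [w_inj /join_preserving_jjoin w_join]]].
pose F x := coord (u (w x)).
have F_inj : injective F by move=> x y /coord_inj/u_inj/w_inj.
have F_join s t : F (jjoin s t) = (maxn (F s).1 (F t).1, lmax (option_le le2) (F s).2 (F t).2).
  by rewrite /F w_join u_join coord_join.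
have F_levels N : exists L, forall x, ((F x).1 <= N)%N -> List.In (F x) L.
  by have [L coordL] := coord_levels N; exists L => x; apply: coordL.
pose Z := option_chain lin2.
exists nat_chain, Z, (fun s => coord (u s)); split; [|split; [|split; [|split]]].
- by move=> a b /coord_inj/u_inj.
- by apply/join_preserving_prod => a b; rewrite u_join coord_join /prod_max /= lmax_leq.
- apply: unbounded_nat_omega => N.
  have [x Nx] := first_projection_unbounded (Z := Z) (F := F) F_inj F_levels N.
  by exists (F x).1; [exists (w x)|apply: ltnW].
- have [beta [beta_in beta_le]] := rat_in_second_projection (Z := Z) (F := F) F_inj F_join F_levels.
  apply; exists beta; split=> // q; have [x <-] := beta_in q.
  by exists (w x).
- move=> n _; exists (None :: List.map (fun i => Some (g1 i)) (List.seq 0 n)) => y [s Es].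
  by have := coord_column (u s); rewrite Es.
Qed.

Section Backward.
Variables (S : JSL) (C1 C2 : Chain) (f : S -> (C1 * C2)%type).
Hypotheses (f_inj : injective f) (f_join : forall s t, f (jjoin s t) = prod_max (f s) (f t)).
Variables (g : nat -> C1) (idx : C1 -> nat).
Hypotheses (g_le : forall m n, (m <= n)%N <-> cle (g m) (g n))
  (idxK : forall s, g (idx (f s).1) = (f s).1).
Variable col : nat -> list C2.
Hypothesis col_spec : forall s, List.In (f s).2 (col (idx (f s).1)).
Variables (h2 : rat -> C2) (rho : rat -> S).
Hypotheses (h2_le : forall q r, q <= r <-> cle (h2 q) (h2 r))
  (rho_spec : forall q, (f (rho q)).2 = h2 q).

Let linC1 := cle_linear C1.
Let linC2 := cle_linear C2.

Lemma g_inj : injective g. Proof. exact: order_embedding_inj (lo_refl linC1) g_le. Qed.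
Lemma h2_inj : injective h2. Proof. exact: order_embedding_inj (lo_refl linC2) h2_le. Qed.

Lemma idx_le s t : cle (f s).1 (f t).1 <-> (idx (f s).1 <= idx (f t).1)%N.
Proof. by rewrite g_le !idxK. Qed.

Lemma f_levels N : exists L, forall s, (idx (f s).1 <= N)%N -> List.In (f s) L.
Proof.
exists (List.flat_map (fun n => List.map (fun c => (g n, c)) (col n)) (List.seq 0 N.+1)).
move=> s sN; apply/List.in_flat_map; exists (idx (f s).1); split; first by apply/List.in_seq; lia.
by apply/List.in_map_iff; exists (f s).2; rewrite idxK -surjective_pairing; split=> //; apply: col_spec.
Qed.

(* [h2 0] only serves as the default value of [List.nth]. *)
Definition column_enum (k : nat) : C2 :=
  let: (n, j) := odflt (0%N, 0%N) (unpickle k) in List.nth j (col n) (h2 0).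

Lemma column_enum_f s : exists k, column_enum k = (f s).2.
Proof.
have [j [_ nth_j]] := List.In_nth _ _ (h2 0) (col_spec s).
by exists (pickle (idx (f s).1, j)); rewrite /column_enum pickleK.
Qed.

Definition snd_code : C2 -> rat :=
  projT1 (cid (countable_chain_embedding (@ltr01 rat) linC2 column_enum)).

Lemma snd_code_le s t : cle (f s).2 (f t).2 <-> le2 (h (snd_code (f s).2)) (h (snd_code (f t).2)).
Proof.
rewrite -h_le /snd_code; case: cid => E /= E_emb.
exact: (E_emb _ _ (column_enum_f s) (column_enum_f t)).2.
Qed.

Lemma anchor_exists n M : exists q, [/\ forall c, List.In c (col n) -> q < snd_code c,
  (M < rk (h q))%N & forall c, List.In c (col n) -> (rk (h (snd_code c)) < rk (h q))%N].
Proof.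
have [v v_lt] := list_lower_bound snd_code (col n).
have [N N_ge] := list_nat_bound (fun c => rk (h (snd_code c))) (col n).
pose q (k : nat) := v - k%:R.
have q_inj : injective q by move=> k k' /addrI /oppr_inj /eqP; rewrite eqr_nat => /eqP.
have [K rkK'] := injective_unbounded (inj_comp rk_inj (inj_comp h_inj q_inj)) (maxn M N).
have := rkK' K (leqnn K); rewrite gtn_max => /andP[MK NK].
exists (q K); split=> // [c /v_lt vc|c /N_ge cN]; last exact: leq_ltn_trans cN NK.
by have : 0 <= K%:R :> rat by []; rewrite /q; lra.
Qed.

Fixpoint anchor n : rat :=
  projT1 (cid (anchor_exists n (if n is m.+1 then rk (h (anchor m)) else 0%N))).

Lemma anchorP n : [/\ forall c, List.In c (col n) -> anchor n < snd_code c,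
  ((if n is m.+1 then rk (h (anchor m)) else 0%N) < rk (h (anchor n)))%N
  & forall c, List.In c (col n) -> (rk (h (snd_code c)) < rk (h (anchor n)))%N].
Proof. by case: n => [|n] /=; case: cid. Qed.

Lemma anchor_mono m n : (m <= n)%N <-> le1 (h (anchor m)) (h (anchor n)).
Proof.
have anchor_lt k : (rk (h (anchor k)) < rk (h (anchor k.+1)))%N by have [] := anchorP k.+1.
rewrite rk_le (leq_mono (homo_ltn (fun _ _ _ => @ltn_trans _ _ _) anchor_lt)) //.
Qed.

Definition into_model (s : S) : S' := elt (h (anchor (idx (f s).1))) (h (snd_code (f s).2)).

Lemma into_model_pair s : rect_pair le1 le2 (h (anchor (idx (f s).1))) (h (snd_code (f s).2)).
Proof.
have [below _ above] := anchorP (idx (f s).1); split.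
- by apply/h_le/ltW/below/col_spec.
- by apply/rk_le/ltnW/above/col_spec.
Qed.

Lemma into_model_join s t : into_model (jjoin s t) = jjoin (into_model s) (into_model t).
Proof.
apply: cp_inj; rewrite cp_join /into_model !elt_cp; try exact: into_model_pair.
rewrite f_join /=; congr (Some (_, _)).
- by apply: (lmax_map (m := fun x => h (anchor (idx x)))); rewrite -anchor_mono; exact: idx_le.
- exact: (lmax_map (m := fun c => h (snd_code c))) (snd_code_le s t).
Qed.

Lemma into_model_inj : injective into_model.
Proof.
move=> s t /(congr1 cp); rewrite !elt_cp; try exact: into_model_pair.
case=> st1 st2; apply: f_inj; rewrite [f s]surjective_pairing [f t]surjective_pairing; congr pair.
- rewrite -idxK -[(f t).1]idxK; congr g; apply/eqP; rewrite eqn_leq.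
  by apply/andP; split; apply/anchor_mono; rewrite st1; apply: (lo_refl lin1).
- by apply: (lo_anti linC2); apply/snd_code_le; rewrite st2; apply: (lo_refl lin2).
Qed.

Lemma embeds_into_model : jsl_embeds S S'.
Proof.
by exists into_model; split; [exact: into_model_inj|apply/join_preserving_jjoin/into_model_join].
Qed.

Definition point_code : X -> rat := projT1 (cid (countable_chain_embedding (@ltr01 rat) lin2 g1)).

Lemma point_codeP :
  (forall x, 0 < point_code x < 1) /\ (forall x y, le2 x y <-> point_code x <= point_code y).
Proof.
rewrite /point_code; case: cid => E /= E_emb; have g1_onto x : exists i, g1 i = x by exists (rk x).
split=> [x|x y]; first exact: (E_emb x x (g1_onto x) (g1_onto x)).1.
exact: (E_emb x y (g1_onto x) (g1_onto y)).2.
Qed.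

Definition base : S := rho 0.
Definition ceiling i := maxn (idx (f base).1) (\max_(j < i.+1) idx (f (rho (point_code (g1 j)))).1).

Lemma dive_exists N : exists s, (N < idx (f s).1)%N /\ exists2 q, q < 0 & (f s).2 = h2 q.
Proof.
pose u (k : nat) := rho (- k.+1%:R).
have fu_inj : injective (f \o u).
  move=> k k' /(congr1 snd); rewrite /= !rho_spec => /h2_inj /oppr_inj /eqP.
  by rewrite eqr_nat => /eqP [].
have [K uK] := finite_levels_escape (lvl := fun s => idx (f s).1) f_levels fu_inj N.
exists (u K); split; first exact: uK.
by exists (- K.+1%:R); [rewrite oppr_lt0 ltr0Sn|apply: rho_spec].
Qed.

Definition dive N := projT1 (cid (dive_exists N)).

Fixpoint spine i : S := dive (maxn (ceiling i) (if i is j.+1 then idx (f (spine j)).1 else 0%N)).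
Definition height i := idx (f (spine i)).1.

Lemma spineP i : [/\ (ceiling i < height i)%N,
  ((if i is j.+1 then height j else 0%N) < height i)%N & exists2 q, q < 0 & (f (spine i)).2 = h2 q].
Proof.
rewrite /height; case: i => [|i] /=; rewrite /dive; case: cid => s [/= lt q_s];
  by split=> //; apply: leq_ltn_trans lt; rewrite ?leq_maxl ?leq_maxr.
Qed.

Lemma height_mono : {mono height : m n / (m <= n)%N}.
Proof.
apply: leq_mono; apply: homo_ltn => [y x z|k]; first exact: ltn_trans.
by have [] := spineP k.+1.
Qed.

(* [spine i] carries the first coordinate of the image of a pair with [rk a = i]: its second
   coordinate is below [h2 0], and its first one above those of [base] and of every
   [rho (point_code b)] with [rk b <= i]. *)
Definition from_model (s : S') : S :=
  if cp s is Some (a, b) then jjoin base (jjoin (spine (rk a)) (rho (point_code b))) else base.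

Lemma base_below i b : cle (f base).1 (g (height i)) /\ cle (f base).2 (h2 (point_code b)).
Proof.
have [[ceil_lt _ _] [/(_ b) /andP[eX_pos _] _]] := (spineP i, point_codeP).
split; last by rewrite rho_spec; apply/h2_le/ltW.
by rewrite -idxK; apply/g_le/ltnW; apply: leq_ltn_trans ceil_lt; apply: leq_maxl.
Qed.

Lemma f_from_model s : f (from_model s) =
  if cp s is Some (a, b) then (g (height (rk a)), h2 (point_code b)) else f base.
Proof.
have := cp_ok s; rewrite /from_model; case: (cp s) => [[a b] [_ ba]|_] //.
have [ceil_lt _ [q q_lt spine_q]] := spineP (rk a).
have [base1 base2] := base_below (rk a) b.
rewrite !f_join /prod_max /= spine_q rho_spec.
have rho_spine : cle (f (rho (point_code b))).1 (f (spine (rk a))).1.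
  apply/idx_le/ltnW; apply: leq_ltn_trans ceil_lt; rewrite -[b]rkK; apply: leq_trans (leq_maxr _ _).
  have rb : (rk b < (rk a).+1)%N by rewrite ltnS -rk_le.
  exact: (@leq_bigmax _ (fun j : 'I_(rk a).+1 => idx (f (rho (point_code (g1 j)))).1) (Ordinal rb)).
rewrite (lmax_l linC1 rho_spine) -[(f (spine _)).1]idxK (lmax_r base1).
have q_b : cle (h2 q) (h2 (point_code b)).
  by apply/h2_le/ltW/(lt_trans q_lt); case: point_codeP => /(_ b) /andP[].
by rewrite (lmax_r q_b) (lmax_r base2).
Qed.

Lemma from_model_inj : injective from_model.
Proof.
move=> s t /(congr1 f); rewrite !f_from_model => fst; apply: cp_inj; move: fst.
have [eX_in eX_le] := point_codeP.
case: (cp s) (cp t) => [[a b]|] [[a' b']|] // fst.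
- case: fst => /g_inj /(incn_inj height_mono) /rk_inj -> /h2_inj ebb'; congr (Some (_, _)).
  by apply: (lo_anti lin2); apply/eX_le; rewrite ebb'.
- have := congr1 snd fst; rewrite /= /base rho_spec => /h2_inj eb0.
  by have := eX_in b; rewrite eb0 ltxx.
- have := congr1 snd fst; rewrite /= /base rho_spec => /h2_inj eb0.
  by have := eX_in b'; rewrite -eb0 ltxx.
Qed.

Lemma from_model_join s t : from_model (jjoin s t) = jjoin (from_model s) (from_model t).
Proof.
apply: f_inj; rewrite f_join !f_from_model cp_join /prod_max.
case: (cp s) (cp t) => [[a b]|] [[a' b']|] /=.
- congr pair.
  + apply: (lmax_map (m := fun x => g (height (rk x)))).
    by rewrite -g_le height_mono rk_le.
  + by apply: (lmax_map (m := fun x => h2 (point_code x))); rewrite -h2_le; have [_] := point_codeP.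
- by have [? ?] := base_below (rk a) b; rewrite !lmax_l.
- by have [? ?] := base_below (rk a') b'; rewrite !lmax_r.
- by rewrite !lmax_id -surjective_pairing.
Qed.

Lemma embeds_from_model : jsl_embeds S' S.
Proof.
by exists from_model; split; [exact: from_model_inj|apply/join_preserving_jjoin/from_model_join].
Qed.

End Backward.

Lemma representable_equimorphic (S : JSL) : omega_representable S -> equimorphic S S'.
Proof.
case=> C1 [C2 [f [f_inj [/join_preserving_prod f_join [[g [g_le g_onto]] [not_scattered columns]]]]]].
have /choice[idx idxK] : forall x : C1, exists n, (exists s, (f s).1 = x) -> g n = x.
  move=> x; case: (pselect (exists s, (f s).1 = x)) => [/g_onto [n gn]|nA].
  - by exists n.
  - by exists 0%N => /nA.
have {}idxK s : g (idx (f s).1) = (f s).1 by apply: idxK; exists s.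
have /choice[col col_l] : forall n, exists l, forall y, (exists s, f s = (g n, y)) -> List.In y l.
  by move=> n; apply: columns; apply/g_onto; exists n.
have col_spec s : List.In (f s).2 (col (idx (f s).1)).
  by apply: col_l; exists s; rewrite idxK -surjective_pairing.
have [h2 [/choice[rho rho_spec] h2_le]] := contrapT not_scattered.
split.
- exact: (embeds_into_model f_inj f_join g_le idxK col_spec h2).
- exact: (embeds_from_model f_inj f_join g_le idxK col_spec h2_le rho_spec).
Qed.

End Model.

Theorem proposition8p2 (S' : JSL) (HS' : in_LD S') (S : JSL) :
  equimorphic S S' <->
  exists (C1 C2 : Chain) (f : S -> (C1 * C2)%type),
    (forall a b, f a = f b -> a = b) /\
    join_preserving (@prod_le C1 C2) f /\
    has_order_type_omega (@cle C1) (fun x => exists s, (f s).1 = x) /\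
    ~ order_scattered (@cle C2) (fun y => exists s, (f s).2 = y) /\
    (forall x : C1, (exists s, (f s).1 = x) ->
       exists l : list C2, forall y : C2, (exists s, f s = (x, y)) -> Stdlib.Lists.List.In y l).
Proof.
case: HS' => X [le1 [le2 [lin1 [lin2 [omega1 [not_scattered iso]]]]]].
have [g1 [rk [rkK rk_le]]] := omega_rank omega1.
have [h [_ h_le]] := contrapT not_scattered.
have [cp [cp_inj cp_ok cp_onto cp_join]] := KCB_pair_coordinates lin1 lin2 iso.
have /choice[elt elt_cp] : forall ab : X * X, exists s, rect_pair le1 le2 ab.1 ab.2 -> cp s = Some ab.
  move=> [a b]; case: (pselect (rect_pair le1 le2 a b)) => [ab|not_ab].
  - by have [s cp_s] := cp_onto (Some (a, b)) ab; exists s.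
  - by have [s _] := cp_onto None I; exists s => /not_ab.
have elt_cp' a b : rect_pair le1 le2 a b -> cp (elt (a, b)) = Some (a, b) := elt_cp (a, b).
split.
- exact: (equimorphic_representable lin1 lin2 rkK rk_le h_le cp_inj cp_ok cp_join elt_cp').
- exact: (representable_equimorphic lin1 lin2 rkK rk_le h_le cp_inj cp_ok cp_join elt_cp').
Qed.
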